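(* Let $M$ be a matching of size $k$ and let $N$ be a matching of size $k+2$ having a block $K$ such that $N-K$ equals $M$ up to cyclic relabeling. Then the degree of $N$ in $\mathbf{DCM}_{k+2}$ equals the degree of $M$ in $\mathbf{DCM}_k$.
   Context: Let $k\ge 1$ and let $X_{2k}=\{P_1,\dots,P_{2k}\}$ be $2k$ points in convex position in the plane, labeled in clockwise cyclic order; indices are taken modulo $2k$. A matching of $X_{2k}$ means a set of $k$ pairwise non-crossing straight segments (edges) with endpoints in $X_{2k}$ covering every point exactly once; its size is $k$. Two matchings $M,M'$ of $X_{2k}$ are disjoint compatible if they have no common edge and no edge of $M$ crosses an edge of $M'$. $\mathbf{DCM}_k$ is the graph whose vertices are the matchings of $X_{2k}$, two being adjacent iff they are disjoint compatible; the degree of a vertex of $\mathbf{DCM}_k$ is invariant under cyclic relabeling of the points. A block of a matching $M$ is a pair of edges $\{P_iP_{i+3},P_{i+1}P_{i+2}\}\subseteq M$; an antiblock is a pair of edges $\{P_iP_{i+1},P_{i+2}P_{i+3}\}\subseteq M$; a separated pair is a block or an antiblock. If $K$ is a separated pair of a matching $N$ of size $k+2$, then $N-K$ denotes the set $N\setminus K$, regarded as a matching of the remaining $2k$ points (which are in convex position) with their inherited cyclic order, i.e. as a matching of size $k$ defined up to cyclic relabeling. *)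

(* Points P_1..P_n in convex position, clockwise, are
   modelled by 'I_n (label j <-> P_{j+1}); edges are 2-element subsets. *)
From mathcomp Require Import all_boot.
Set Implicit Arguments. Unset Strict Implicit. Unset Printing Implicit Defensive.

(* Two chords of a convex polygon cross iff their four endpoints are distinct
   and interleave in the cyclic (= label) order. *)
Definition crossing (n : nat) (e f : {set 'I_n}) : bool :=
  [exists a : 'I_n, exists b : 'I_n, exists c : 'I_n, exists d : 'I_n,
    [&& e == [set a; b], f == [set c; d] &
        ((a < c < b) && (b < d)) || ((c < a < d) && (d < b))]].

Definition is_matching (n : nat) (M : {set {set 'I_n}}) : bool :=
  [&& [forall e in M, #|e| == 2],
      [forall x : 'I_n, #|[set e in M | x \in e]| == 1] &
      [forall e in M, forall f in M, ~~ crossing e f]].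

Definition dcompat (n : nat) (M M' : {set {set 'I_n}}) : bool :=
  [disjoint M & M'] && [forall e in M, forall f in M', ~~ crossing e f].

Definition degree (n : nat) (M : {set {set 'I_n}}) : nat :=
  #|[set M' : {set {set 'I_n}} | is_matching M' && dcompat M M']|.

Definition pt (n : nat) (j : nat) : 'I_n.+1 := inord (j %% n.+1).

Definition has_block_at (k : nat) (N : {set {set 'I_(k.*2).+4}}) (i : nat) : bool :=
  ([set pt _ i; pt _ (i + 3)] \in N) && ([set pt _ (i + 1); pt _ (i + 2)] \in N).

(* N - K (K the block at i), with the remaining 2k points i+4, i+5, ..., i-1
   in inherited cyclic order, equals M after the cyclic relabeling by r. *)
Definition removal_is_rot (k : nat) (N : {set {set 'I_(k.*2).+4}})
    (M : {set {set 'I_(k.*2)}}) (i r : nat) : Prop :=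
  forall a b : 'I_(k.*2),
    ([set a; b] \in M) =
    ([set pt _ (i + 4 + ((a + r) %% k.*2)); pt _ (i + 4 + ((b + r) %% k.*2))] \in N).

From mathcomp Require Import all_boot zify.
Set Implicit Arguments. Unset Strict Implicit. Unset Printing Implicit Defensive.

(* Write [q j] for [P_(i+j)], so that the block of [N] is [q 0 q 3, q 1 q 2].
   A neighbour [N'] of [N] in DCM cannot use [q 1 q 2] and cannot cross
   [q 0 q 3], so the partners of [q 1] and [q 2] in [N'] lie in [{q 0, q 3}];
   as these two edges do not cross, [N'] contains the antiblock
   [q 0 q 1, q 2 q 3].  Chords between consecutive points cross nothing, so
   relabelling and adding the antiblock is a bijection from the neighbours of
   [M] onto those of [N], with inverse "remove the antiblock". *)

Definition interleaved (a b c d : nat) :=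
  ((a < c < b) && (b < d)) || ((c < a < d) && (d < b)).

Definition chord_cross (a b c d : nat) :=
  [|| interleaved a b c d, interleaved b a c d, interleaved a b d c | interleaved b a d c].

Lemma chord_crossCl a b c d : chord_cross a b c d = chord_cross b a c d.
Proof. by rewrite /chord_cross orbCA (orbC (interleaved a b d c)). Qed.

Lemma chord_crossCr a b c d : chord_cross a b c d = chord_cross a b d c.
Proof. by rewrite /chord_cross orbA orbC -orbA. Qed.

Lemma chord_crossC a b c d : chord_cross a b c d = chord_cross c d a b.
Proof. rewrite /chord_cross /interleaved; lia. Qed.

Lemma chord_crossW a b c d : a < c < b -> b < d -> chord_cross a b c d.
Proof. by move=> h1 h2; rewrite /chord_cross /interleaved h1 h2. Qed.

Lemma chord_cross_addl s a b c d :
  chord_cross (s + a) (s + b) (s + c) (s + d) = chord_cross a b c d.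
Proof. rewrite /chord_cross /interleaved; lia. Qed.

Lemma modn_succE m y : y < m -> y.+1 %% m = if y.+1 < m then y.+1 else 0.
Proof.
move=> ltym; case: ifP => ltSym; first by rewrite modn_small.
have -> : y.+1 = m by lia.
by rewrite modnn.
Qed.

(* Only the last endpoint can wrap around to [0], which turns the pattern
   [a < c < b < d] into [d' < a' < c' < b']. *)
Lemma chord_cross_succW m a b c d : a < c < b -> b < d -> d < m ->
  chord_cross (a.+1 %% m) (b.+1 %% m) (c.+1 %% m) (d.+1 %% m).
Proof.
move=> acb bd dm.
rewrite !modn_succE; try lia.
have [-> -> ->] : [/\ a.+1 < m, b.+1 < m & c.+1 < m] by split; lia.
case: ifP => _; first by apply: chord_crossW; lia.
by rewrite chord_crossCr chord_crossC; apply: chord_crossW; lia.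
Qed.

Lemma chord_cross_succ m a b c d : a < m -> b < m -> c < m -> d < m ->
  chord_cross a b c d -> chord_cross (a.+1 %% m) (b.+1 %% m) (c.+1 %% m) (d.+1 %% m).
Proof.
move=> am bm cm dm; rewrite [chord_cross a b c d]/chord_cross /interleaved.
case/or4P => /orP[] /andP[] /andP[h1 h2] h3.
- by apply: chord_cross_succW => //; lia.
- by rewrite chord_crossC; apply: chord_cross_succW => //; lia.
- by rewrite chord_crossCl; apply: chord_cross_succW => //; lia.
- by rewrite chord_crossCl chord_crossC; apply: chord_cross_succW => //; lia.
- by rewrite chord_crossCr; apply: chord_cross_succW => //; lia.
- by rewrite chord_crossCr chord_crossC; apply: chord_cross_succW => //; lia.
- by rewrite chord_crossCl chord_crossCr; apply: chord_cross_succW => //; lia.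
- by rewrite chord_crossCl chord_crossCr chord_crossC; apply: chord_cross_succW => //; lia.
Qed.

Lemma chord_cross_rotW m t a b c d : a < m -> b < m -> c < m -> d < m ->
  chord_cross a b c d ->
  chord_cross ((a + t) %% m) ((b + t) %% m) ((c + t) %% m) ((d + t) %% m).
Proof.
move=> am bm cm dm abcd; have m_gt0 : 0 < m by lia.
elim: t => [|t IH]; first by rewrite !addn0 !modn_small.
have addSE y : (y + t.+1) %% m = ((y + t) %% m).+1 %% m.
  by rewrite -[((y + t) %% m).+1]addn1 modnDml addn1 addnS.
by rewrite !addSE; apply: chord_cross_succ => //; apply: ltn_pmod.
Qed.

Lemma chord_cross_rot m t a b c d : a < m -> b < m -> c < m -> d < m ->
  chord_cross ((a + t) %% m) ((b + t) %% m) ((c + t) %% m) ((d + t) %% m)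
  = chord_cross a b c d.
Proof.
move=> am bm cm dm; have m_gt0 : 0 < m by lia.
apply/idP/idP; last exact: chord_cross_rotW.
have rotK y : y < m -> ((y + t) %% m + (m - t %% m)) %% m = y.
  move=> ym; rewrite modnDml {1}(divn_eq t m).
  have ltm := ltn_pmod t m_gt0.
  have -> : y + (t %/ m * m + t %% m) + (m - t %% m) = (t %/ m).+1 * m + y.
    rewrite mulSn; lia.
  by rewrite modnMDl modn_small.
have ltm y : (y + t) %% m < m by exact: ltn_pmod.
by move/(chord_cross_rotW (m - t %% m) (ltm a) (ltm b) (ltm c) (ltm d)); rewrite !rotK.
Qed.

Lemma set2_eq_cases (T : finType) (a b c d : T) :
  [set a; b] = [set c; d] -> (a = c /\ b = d) \/ (a = d /\ b = c).
Proof.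
move=> E.
have : a \in [set c; d] by rewrite -E set21.
have : b \in [set c; d] by rewrite -E set22.
have : c \in [set a; b] by rewrite E set21.
have : d \in [set a; b] by rewrite E set22.
by move=> /set2P[]? /set2P[]? /set2P[]? /set2P[]?; subst; auto.
Qed.

Lemma imset_set2 (T U : finType) (f : T -> U) a b : f @: [set a; b] = [set f a; f b].
Proof. by rewrite imsetU1 imset_set1. Qed.

Lemma crossingC n (e f : {set 'I_n}) : crossing e f = crossing f e.
Proof.
have imp (e' f' : {set 'I_n}) : crossing e' f' -> crossing f' e'.
  case/existsP=> a /existsP [b /existsP [c /existsP [d /and3P [/eqP-> /eqP-> h]]]].
  apply/existsP; exists c; apply/existsP; exists d; apply/existsP; exists a.
  by apply/existsP; exists b; rewrite !eqxx orbC.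
by apply/idP/idP; apply: imp.
Qed.

Lemma crossing_set2 n (a b c d : 'I_n) :
  crossing [set a; b] [set c; d] = chord_cross a b c d.
Proof.
apply/idP/idP.
- case/existsP=> a' /existsP [b' /existsP [c' /existsP [d' /and3P [/eqP e1 /eqP e2 h]]]].
  case: (set2_eq_cases e1) => [[-> ->]|[-> ->]];
  case: (set2_eq_cases e2) => [[-> ->]|[-> ->]];
  by rewrite /chord_cross /interleaved h ?orbT.
- have cross a' b' c' d' : [set a; b] = [set a'; b'] -> [set c; d] = [set c'; d'] ->
      interleaved a' b' c' d' -> crossing [set a; b] [set c; d].
    move=> e1 e2 h; apply/existsP; exists a'; apply/existsP; exists b'.
    by apply/existsP; exists c'; apply/existsP; exists d'; rewrite e1 e2 !eqxx.
  case/or4P => h; [apply: (cross a b c d) | apply: (cross b a c d) |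
                   apply: (cross a b d c) | apply: (cross b a d c)];
  by rewrite // setUC.
Qed.

Definition ofs (p i y : nat) : 'I_p.+1 := pt p (i + y).

Lemma val_ofs p i y : ofs p i y = (i + y) %% p.+1 :> nat.
Proof. by rewrite /ofs /pt inordK // ltn_pmod. Qed.

Lemma ofs_eq p i y z : y < p.+1 -> z < p.+1 -> (ofs p i y == ofs p i z) = (y == z).
Proof.
move=> yp zp; apply/eqP/eqP => [/(congr1 (@nat_of_ord _))/eqP|-> //].
by rewrite !val_ofs eqn_modDl !modn_small // => /eqP.
Qed.

Lemma ofs_onto p i (x : 'I_p.+1) : exists2 y, y < p.+1 & x = ofs p i y.
Proof.
have inj : injective (fun y : 'I_p.+1 => ofs p i y).
  by move=> y z /eqP; rewrite ofs_eq // => /eqP /val_inj.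
by exists (invF inj x); rewrite ?(f_invF inj x).
Qed.

Lemma crossing_ofs p i a b c d : a < p.+1 -> b < p.+1 -> c < p.+1 -> d < p.+1 ->
  crossing [set ofs p i a; ofs p i b] [set ofs p i c; ofs p i d] = chord_cross a b c d.
Proof. by move=> *; rewrite crossing_set2 !val_ofs !(addnC i) chord_cross_rot. Qed.

Lemma crossing_ofs_succ p i j (E : {set 'I_p.+1}) : j.+1 < p.+1 -> #|E| == 2 ->
  crossing [set ofs p i j; ofs p i j.+1] E = false.
Proof.
move=> jp /cards2P[x [y [_ ->]]].
case: (ofs_onto i x) => a ap ->; case: (ofs_onto i y) => b bp ->.
by rewrite crossing_ofs //; try lia; rewrite /chord_cross /interleaved; lia.
Qed.

Section Matchings.
Variable n : nat.
Implicit Types (S A B : {set {set 'I_n}}) (e f : {set 'I_n}).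

Lemma matching_card2 S e : is_matching S -> e \in S -> #|e| == 2.
Proof. by case/and3P => /forall_inP H _ _ /H. Qed.

Lemma matching_edge2 S e : is_matching S -> e \in S ->
  exists a b, a != b /\ e = [set a; b].
Proof. by move=> hS /(matching_card2 hS) /cards2P. Qed.

Lemma matching_cover S x : is_matching S -> exists2 e, e \in S & x \in e.
Proof.
case/and3P => _ /forallP/(_ x)/cards1P [e0 E] _.
have : e0 \in [set e in S | x \in e] by rewrite E set11.
by rewrite inE => /andP[]; exists e0.
Qed.

Lemma matching_edge_uniq S x e f : is_matching S -> e \in S -> f \in S ->
  x \in e -> x \in f -> e = f.
Proof.
case/and3P => _ /forallP/(_ x)/cards1P [e0 E] _ eS fS xe xf.
have : e \in [set e in S | x \in e] by rewrite inE eS xe.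
have : f \in [set e in S | x \in e] by rewrite inE fS xf.
by rewrite E !inE => /eqP -> /eqP ->.
Qed.

Lemma matching_nocross S e f : is_matching S -> e \in S -> f \in S -> crossing e f = false.
Proof. by case/and3P => _ _ /forall_inP H /H /forall_inP H2 /H2 /negbTE. Qed.

Lemma matching_intro S :
  (forall e, e \in S -> #|e| == 2) ->
  (forall x, exists2 e, e \in S & x \in e) ->
  (forall x e f, e \in S -> f \in S -> x \in e -> x \in f -> e = f) ->
  (forall e f, e \in S -> f \in S -> crossing e f = false) ->
  is_matching S.
Proof.
move=> card2 cover uniq nocross; apply/and3P; split.
- exact/forall_inP.
- apply/forallP => x; apply/cards1P; have [e eS xe] := cover x; exists e.
  apply/setP => f; rewrite !inE; apply/andP/eqP => [[fS xf]|->//].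
  exact: uniq xf xe.
- by apply/forall_inP => e eS; apply/forall_inP => f fS; rewrite nocross.
Qed.

Lemma edge_partner e x : #|e| == 2 -> x \in e -> exists2 y, y != x & e = [set x; y].
Proof.
case/cards2P => a [b [ab ->]] /set2P[]->; first by exists b; rewrite 1?eq_sym.
by exists a; rewrite 1?setUC.
Qed.

Lemma dcompat_disj A B e : dcompat A B -> e \in A -> e \in B -> False.
Proof. by case/andP => /disjoint_setI0/setP/(_ e); rewrite !inE => + _ eA eB; rewrite eA eB. Qed.

Lemma dcompat_nocross A B e f : dcompat A B -> e \in A -> f \in B -> crossing e f = false.
Proof. by case/andP => _ /forall_inP H /H /forall_inP H2 /H2 /negbTE. Qed.

Lemma dcompat_intro A B :
  (forall e, e \in A -> e \in B -> False) ->
  (forall e f, e \in A -> f \in B -> crossing e f = false) -> dcompat A B.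
Proof.
move=> disj nocross; apply/andP; split.
- by apply/pred0P => e /=; apply/negP => /andP[/disj].
- by apply/forall_inP => e eA; apply/forall_inP => f fB; rewrite nocross.
Qed.

End Matchings.

Section BlockRemoval.
Variables (n i r : nat).
Hypothesis n_gt0 : 0 < n.
Implicit Types (e : {set 'I_n}) (E F : {set 'I_n.+4}) (a b : 'I_n).

Local Notation q := (ofs n.+3 i).

(* The relabelling of [removal_is_rot]: point [a] of [M] is the point of [N]
   at offset [4 + (a + r) mod n] from [P_i], i.e. outside the block. *)
Definition embed a : 'I_n.+4 := q (4 + (a + r) %% n).

Lemma embed_offset_lt a : 4 + (a + r) %% n < n.+4.
Proof. by have := ltn_pmod (a + r) n_gt0; lia. Qed.

Lemma embed_inj : injective embed.
Proof.
move=> a b /eqP; rewrite ofs_eq ?embed_offset_lt // eqn_add2l eqn_modDr.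
by rewrite !modn_small // => /eqP/val_inj.
Qed.

Lemma block_neq_embed j a : j < 4 -> (q j == embed a) = false.
Proof. by move=> j4; rewrite ofs_eq ?embed_offset_lt //; lia. Qed.

Lemma block_notin_embed j e : j < 4 -> q j \notin embed @: e.
Proof. by move=> j4; apply/imsetP => -[a _ /eqP]; rewrite block_neq_embed. Qed.

Lemma block_or_embed (x : 'I_n.+4) :
  (exists2 j, j < 4 & x = q j) \/ exists a, x = embed a.
Proof.
have [y yn ->] := ofs_onto i x.
have [y4|y4] := ltnP y 4; [by left; exists y | right].
have lt_n : (y - 4 + (n - r %% n)) %% n < n by exact: ltn_pmod.
exists (Ordinal lt_n); rewrite /embed /= modnDml {2}(divn_eq r n).
have ltr := ltn_pmod r n_gt0.
have -> : y - 4 + (n - r %% n) + (r %/ n * n + r %% n) = (r %/ n).+1 * n + (y - 4).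
  by rewrite mulSn; lia.
by rewrite modnMDl modn_small ?subnKC //; lia.
Qed.

Lemma crossing_embed a b c d :
  crossing [set embed a; embed b] [set embed c; embed d] = crossing [set a; b] [set c; d].
Proof.
by rewrite crossing_ofs ?embed_offset_lt // chord_cross_addl chord_cross_rot // crossing_set2.
Qed.

Lemma crossing_outer_embed a b : crossing [set q 0; q 3] [set embed a; embed b] = false.
Proof. by rewrite crossing_ofs ?embed_offset_lt. Qed.

Lemma matching_block_split (S : {set {set 'I_n.+4}}) (e1 e2 : {set 'I_n.+4}) E :
  is_matching S -> e1 \in S -> e2 \in S ->
  (forall j, j < 4 -> (q j \in e1) || (q j \in e2)) -> E \in S ->
  [\/ E = e1, E = e2 | exists a b, E = [set embed a; embed b]].
Proof.
move=> hS e1S e2S cover ES.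
have through_block j : j < 4 -> q j \in E -> E = e1 \/ E = e2.
  move=> j4 qjE; case/orP: (cover j j4) => qje; [left | right];
  exact: matching_edge_uniq hS ES _ qjE qje.
have [x [y [_ Exy]]] := matching_edge2 hS ES.
have xE : x \in E by rewrite Exy set21.
have yE : y \in E by rewrite Exy set22.
have [[j j4 xq]|[a xa]] := block_or_embed x.
  by rewrite xq in xE; case: (through_block j j4 xE) => ->; [apply: Or31 | apply: Or32].
have [[j j4 yq]|[b yb]] := block_or_embed y.
  by rewrite yq in yE; case: (through_block j j4 yE) => ->; [apply: Or31 | apply: Or32].
by apply: Or33; exists a, b; rewrite Exy xa yb.
Qed.

Definition antiblock : {set {set 'I_n.+4}} := [set [set q 0; q 1]; [set q 2; q 3]].

Definition extend (M' : {set {set 'I_n}}) : {set {set 'I_n.+4}} :=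
  [set embed @: e | e : {set 'I_n} in M'] :|: antiblock.

Definition restrict (N' : {set {set 'I_n.+4}}) : {set {set 'I_n}} :=
  [set e : {set 'I_n} | embed @: e \in N'].

Lemma antiblock_cover j : j < 4 -> (q j \in [set q 0; q 1]) || (q j \in [set q 2; q 3]).
Proof. by case: j => [|[|[|[|]]]] // _; rewrite !in_set2 !eqxx ?orbT. Qed.

Lemma antiblock_nocross E F : E \in antiblock -> #|F| == 2 -> crossing E F = false.
Proof. by move=> /set2P[]-> F2; rewrite crossing_ofs_succ. Qed.

Lemma embed_notin_antiblock e : embed @: e \notin antiblock.
Proof.
apply/set2P => -[] E; [have := @block_notin_embed 0 e | have := @block_notin_embed 2 e];
by rewrite E set21 => /(_ isT).
Qed.

Lemma extendP M' E :
  E \in extend M' -> E \in antiblock \/ exists2 e, e \in M' & E = embed @: e.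
Proof. by rewrite in_setU orbC => /orP[]; [left | move/imsetP; right]. Qed.

Lemma antiblock_sub_extend M' : antiblock \subset extend M'.
Proof. exact: subsetUr. Qed.

Lemma mem_extend_embed M' e : (embed @: e \in extend M') = (e \in M').
Proof.
rewrite in_setU (negbTE (embed_notin_antiblock e)) orbF.
by rewrite (mem_imset _ _ (imset_inj embed_inj)).
Qed.

Lemma restrict_extend M' : restrict (extend M') = M'.
Proof. by apply/setP => e; rewrite inE mem_extend_embed. Qed.

Lemma extend_inj : injective extend.
Proof. exact: can_inj restrict_extend. Qed.

Lemma extend_edge_block M' j E : j < 4 -> E \in extend M' -> q j \in E ->
  E = if j < 2 then [set q 0; q 1] else [set q 2; q 3].
Proof.
move=> j4 /extendP[/set2P[]->|[e _ ->]]; last by rewrite (negbTE (block_notin_embed e j4)).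
all: by rewrite in_set2 !ofs_eq //; try lia; case: j j4 => [|[|[|[|]]]].
Qed.

Lemma extend_edge_embed M' a E : E \in extend M' -> embed a \in E ->
  exists2 e, e \in M' & a \in e /\ E = embed @: e.
Proof.
case/extendP => [/set2P[]->|[e eM ->]].
- by rewrite in_set2 !(eq_sym (embed a)) !block_neq_embed.
- by rewrite in_set2 !(eq_sym (embed a)) !block_neq_embed.
- by rewrite (mem_imset _ _ embed_inj) => ae; exists e.
Qed.

Lemma matching_extend M' : is_matching M' -> is_matching (extend M').
Proof.
move=> hM'.
have card2 E : E \in extend M' -> #|E| == 2.
  case/extendP => [/set2P[]->|[e eM ->]]; rewrite ?cards2 ?ofs_eq //.
  by rewrite card_imset ?(matching_card2 hM') //; exact: embed_inj.
apply: matching_intro => // [x|x E F ES FS xE xF|E F ES FS].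
- have [[j j4 ->]|[a ->]] := block_or_embed x.
    case/orP: (antiblock_cover j4) => qj;
      [exists [set q 0; q 1] | exists [set q 2; q 3]] => //;
    by apply: (subsetP (antiblock_sub_extend M')); rewrite !inE eqxx ?orbT.
  have [e eM ae] := matching_cover a hM'.
  by exists (embed @: e); rewrite ?mem_extend_embed ?imset_f.
- have [[j j4 xq]|[a xa]] := block_or_embed x; subst x.
    by rewrite (extend_edge_block j4 ES xE) (extend_edge_block j4 FS xF).
  have [e eM [ae ->]] := extend_edge_embed ES xE.
  have [f fM [af ->]] := extend_edge_embed FS xF.
  by rewrite (matching_edge_uniq hM' eM fM ae af).
- have [Eab|[e eM Ee]] := extendP ES; first exact: antiblock_nocross Eab (card2 F FS).
  have [Fab|[f fM Ff]] := extendP FS.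
    by rewrite crossingC; exact: antiblock_nocross Fab (card2 E ES).
  have [a [b [_ eab]]] := matching_edge2 hM' eM.
  have [c [d [_ fcd]]] := matching_edge2 hM' fM.
  by rewrite Ee Ff eab fcd !imset_set2 crossing_embed -eab -fcd (matching_nocross hM').
Qed.

Lemma matching_extend_inv M' : is_matching (extend M') -> is_matching M'.
Proof.
move=> hext.
have card2 e : e \in M' -> #|e| == 2.
  move=> eM; rewrite -(card_imset _ embed_inj).
  by apply: (matching_card2 hext); rewrite mem_extend_embed.
apply: matching_intro => // [a|a e f eM fM ae af|e f eM fM].
- have [E ES aE] := matching_cover (embed a) hext.
  by have [e eM [ae _]] := extend_edge_embed ES aE; exists e.
- apply: (imset_inj embed_inj); apply: (matching_edge_uniq (x := embed a) hext);
  by rewrite ?mem_extend_embed ?(mem_imset _ _ embed_inj).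
- case/cards2P: (card2 e eM) => a [b [_ eab]]; case/cards2P: (card2 f fM) => c [d [_ fcd]].
  rewrite eab fcd -crossing_embed -!imset_set2 -eab -fcd.
  by apply: (matching_nocross hext); rewrite mem_extend_embed.
Qed.

Lemma extend_restrict N' : is_matching N' -> antiblock \subset N' -> extend (restrict N') = N'.
Proof.
move=> hN' abN'; apply/setP => E; apply/idP/idP => [|EN'].
  by case/extendP => [/(subsetP abN')|[e + ->]]; rewrite ?inE.
have e1N' := subsetP abN' _ (set21 [set q 0; q 1] [set q 2; q 3]).
have e2N' := subsetP abN' _ (set22 [set q 0; q 1] [set q 2; q 3]).
have [->|->|[a [b Eab]]] := matching_block_split hN' e1N' e2N' antiblock_cover EN'.
- by apply: (subsetP (antiblock_sub_extend _)); rewrite set21.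
- by apply: (subsetP (antiblock_sub_extend _)); rewrite set22.
- by rewrite Eab -imset_set2 mem_extend_embed inE imset_set2 -Eab.
Qed.

Variables (M : {set {set 'I_n}}) (N : {set {set 'I_n.+4}}).
Hypothesis M_matching : is_matching M.
Hypothesis N_matching : is_matching N.
Hypothesis outer_in_N : [set q 0; q 3] \in N.
Hypothesis inner_in_N : [set q 1; q 2] \in N.
Hypothesis N_minus_block :
  forall a b : 'I_n, ([set a; b] \in M) = ([set embed a; embed b] \in N).

Lemma N_edge_split E : E \in N ->
  [\/ E = [set q 0; q 3], E = [set q 1; q 2] |
      exists a b, E = [set embed a; embed b] /\ [set a; b] \in M].
Proof.
move=> EN.
have cover j : j < 4 -> (q j \in [set q 0; q 3]) || (q j \in [set q 1; q 2]).
  by case: j => [|[|[|[|]]]] // _; rewrite !in_set2 !eqxx ?orbT.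
have [->|->|[a [b Eab]]] := matching_block_split N_matching outer_in_N inner_in_N cover EN.
- exact: Or31.
- exact: Or32.
- by apply: Or33; exists a, b; rewrite N_minus_block -Eab.
Qed.

(* The partner cannot cross [q 0 q 3], and [y + j = 3] would reuse the edge [q 1 q 2]. *)
Lemma inner_partner N' j : is_matching N' -> dcompat N N' -> 0 < j < 3 ->
  exists y, [/\ y < 4, y != j, y + j != 3 & [set q j; q y] \in N'].
Proof.
move=> hN' hd j03; have jn : j < n.+4 by lia.
have [E EN' qjE] := matching_cover (q j) hN'.
have [v vj Ev] := edge_partner (matching_card2 hN' EN') qjE.
have [y yn vy] := ofs_onto i v; subst v.
rewrite ofs_eq // in vj.
exists y; split; rewrite -?Ev //.
- rewrite ltnNge; apply/negP => y4.
  have := dcompat_nocross hd outer_in_N EN'; rewrite Ev crossing_ofs //.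
  by rewrite /chord_cross /interleaved; lia.
- apply/eqP => yj3; apply: (dcompat_disj hd inner_in_N).
  suff -> : [set q 1; q 2] = E by [].
  rewrite Ev; have [[-> ->]|[-> ->]] : (j = 1 /\ y = 2) \/ (j = 2 /\ y = 1) by lia.
  all: by rewrite // setUC.
Qed.

Lemma antiblock_forced N' : is_matching N' -> dcompat N N' -> antiblock \subset N'.
Proof.
move=> hN' hd.
have [y1 [y1_4 y1_1 y1_2 e1N']] := inner_partner (j := 1) hN' hd isT.
have [y2 [y2_4 y2_2 y2_1 e2N']] := inner_partner (j := 2) hN' hd isT.
have [y1n y2n] : y1 < n.+4 /\ y2 < n.+4 by lia.
have y12 : y1 != y2.
  apply/eqP => y12; subst y2.
  have e12 := matching_edge_uniq hN' e1N' e2N' (set22 _ _) (set22 _ _).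
  by have := set21 (q 2) (q y1); rewrite -e12 in_set2 !ofs_eq // [2 == y1]eq_sym (negbTE y2_2).
have [y1E y2E] : y1 = 0 /\ y2 = 3.
  have := matching_nocross hN' e1N' e2N'; rewrite crossing_ofs //.
  by rewrite /chord_cross /interleaved; lia.
by rewrite y1E y2E in e1N' e2N'; apply/subsetP => E /set2P[]->; rewrite // setUC.
Qed.

Lemma dcompat_extend M' : is_matching M' -> dcompat M M' -> dcompat N (extend M').
Proof.
move=> hM' hd; apply: dcompat_intro => [E EN Eext|E F EN Fext].
- have [EK|EK|[a [b [Eab abM]]]] := N_edge_split EN.
  + have := extend_edge_block (isT : 3 < 4) Eext; rewrite EK set22 => /(_ isT) /= E23.
    by have := set21 (q 0) (q 3); rewrite E23 in_set2 !ofs_eq.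
  + have := extend_edge_block (isT : 1 < 4) Eext; rewrite EK set21 => /(_ isT) /= E01.
    by have := set22 (q 1) (q 2); rewrite E01 in_set2 !ofs_eq.
  + have aE : embed a \in E by rewrite Eab set21.
    have [e eM [_ Ee]] := extend_edge_embed Eext aE.
    have eab : e = [set a; b].
      by apply: (imset_inj embed_inj); rewrite -Ee Eab imset_set2.
    by apply: (dcompat_disj hd abM); rewrite -eab.
- have [Fab|[f fM ->]] := extendP Fext.
    by rewrite crossingC antiblock_nocross ?(matching_card2 N_matching).
  have [c [d [cd fcd]]] := matching_edge2 hM' fM; rewrite fcd imset_set2.
  have [->|->|[a [b [-> abM]]]] := N_edge_split EN.
  + exact: crossing_outer_embed.
  + by rewrite crossing_ofs_succ // cards2 (inj_eq embed_inj) cd.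
  + by rewrite crossing_embed (dcompat_nocross hd) // -fcd.
Qed.

Lemma dcompat_extend_inv M' : is_matching M' -> dcompat N (extend M') -> dcompat M M'.
Proof.
move=> hM' hd; apply: dcompat_intro => [e eM eM'|e f eM fM'].
- have [a [b [_ eab]]] := matching_edge2 M_matching eM.
  apply: (dcompat_disj hd (e := embed @: e)); last by rewrite mem_extend_embed.
  by rewrite eab imset_set2 -N_minus_block -eab.
- have [a [b [_ eab]]] := matching_edge2 M_matching eM.
  have [c [d [_ fcd]]] := matching_edge2 hM' fM'.
  rewrite eab fcd -crossing_embed; apply: (dcompat_nocross hd).
    by rewrite -N_minus_block -eab.
  by rewrite -imset_set2 -fcd mem_extend_embed.
Qed.

Lemma degree_remove_block : degree N = degree M.
Proof.
rewrite /degree -(card_imset _ extend_inj); apply: eq_card => N'.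
rewrite inE; apply/andP/imsetP => [[hN' hd]|[M' + ->]].
- have extendK := extend_restrict hN' (antiblock_forced hN' hd).
  have hM' : is_matching (restrict N') by apply: matching_extend_inv; rewrite extendK.
  exists (restrict N'); rewrite // inE hM'.
  by apply: dcompat_extend_inv; rewrite ?extendK.
- by rewrite inE => /andP[hM' hd]; split; [exact: matching_extend | exact: dcompat_extend].
Qed.

End BlockRemoval.

Theorem mainTheorem8 (k : nat) (hk : 1 <= k)
    (M : {set {set 'I_(k.*2)}}) (N : {set {set 'I_(k.*2).+4}}) :
  is_matching M -> is_matching N ->
  (exists i : nat, has_block_at N i /\ exists r : nat, removal_is_rot N M i r) ->
  degree N = degree M.
Proof.
move=> hM hN [i [/andP[outer inner] [r hrem]]].
have k2_gt0 : 0 < k.*2 by rewrite double_gt0.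
apply: (degree_remove_block (i := i) (r := r) k2_gt0 hM hN) => //.
- by rewrite /ofs addn0.
- by move=> a b; rewrite /embed /ofs !addnA; exact: hrem.
Qed.
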